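(* Let $\mathcal{H}_A$, $\mathcal{H}_B$, $\mathcal{H}_{B'}$ be finite-dimensional Hilbert spaces, let $\rho_{AB}$ be a quantum state on $\mathcal{H}_A\otimes\mathcal{H}_B$, let $\epsilon\ge 0$, and let $\mathcal{F}$ be a trace-preserving completely positive map from system $B$ to system $B'$. Then $$\bar{R}_\epsilon(A|B)_{\rho}\le \bar{R}_\epsilon(A|B')_{\mathcal{F}(\rho)},$$ where $\mathcal{F}(\rho)$ denotes the state $(\mathrm{id}_A\otimes\mathcal{F})(\rho_{AB})$ on $\mathcal{H}_A\otimes\mathcal{H}_{B'}$.
   Context: All Hilbert spaces are finite-dimensional. For a Hermitian operator $X=\sum_i\lambda_iE_i$ (spectral decomposition), $\{X\le 0\}=\sum_{i:\lambda_i\le 0}E_i$ denotes the projection onto the nonpositive eigenspace; $\{X\ge0\}$ etc. are defined analogously. Logarithms are base 2. For a state $\rho_{AB}$ on $\mathcal{H}_A\otimes\mathcal{H}_B$ with marginal $\rho_B=\mathrm{Tr}_A\rho_{AB}$, set $\rho^{(2)}_B=\mathrm{Tr}_A[\rho_{AB}^2]$. For $\epsilon\ge0$, the information spectrum collision entropy is $$R_\epsilon(A|B)_\rho=\sup\big\{\lambda : \mathrm{Tr}\big[\{\rho^{(2)}_B-2^{-\lambda}\rho_B^2\le 0\}\rho_B\big]\ge 1-\epsilon\big\},$$ and the version with optimal side information is $$\bar{R}_\epsilon(A|B)_\rho=\sup_{\mathcal{H}_C,\ \rho_{ABC}:\ \mathrm{Tr}_C[\rho_{ABC}]=\rho_{AB}}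 R_\epsilon(A|BC)_\rho,$$ the supremum over all Hilbert spaces $\mathcal{H}_C$ and states $\rho_{ABC}$ on $\mathcal{H}_A\otimes\mathcal{H}_B\otimes\mathcal{H}_C$ extending $\rho_{AB}$, where $R_\epsilon(A|BC)_\rho$ is $R_\epsilon$ with $B$ replaced by the composite system $BC$ (so $\rho^{(2)}_{BC}=\mathrm{Tr}_A[\rho_{ABC}^2]$). *)

From HB Require Import structures.
From mathcomp Require Import all_boot all_order all_algebra.
From mathcomp Require Import complex.
From mathcomp Require Import classical_sets reals ereal exp.
Set Implicit Arguments. Unset Strict Implicit. Unset Printing Implicit Defensive.
Import Order.TTheory GRing.Theory Num.Theory Num.Def.
Local Open Scope ring_scope.
Local Open Scope classical_set_scope.

Section QDefs.
Variable R : realType.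
Local Notation C := (R[i]).

(* index of the basis vector |i> (x) |j> in H_m (x) H_n *)
Definition tidx (m n : nat) (i : 'I_m) (j : 'I_n) : 'I_(m * n) := mxvec_index i j.
Definition untidx (m n : nat) (k : 'I_(m * n)) : 'I_m * 'I_n :=
  enum_val (cast_ord (esym (@mxvec_cast m n)) k).

Definition adj (m n : nat) (M : 'M[C]_(m, n)) : 'M[C]_(n, m) := map_mx conjC (M^T).

Definition psd (n : nat) (M : 'M[C]_n) : Prop :=
  adj M = M /\ forall v : 'rV[C]_n, 0 <= (v *m M *m adj v) 0 0.

Definition is_state (n : nat) (M : 'M[C]_n) : Prop := psd M /\ \tr M = 1.

Definition ptr1 (m n : nat) (M : 'M[C]_(m * n)) : 'M[C]_n :=
  \matrix_(j, j') \sum_(i < m) M (tidx i j) (tidx i j').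

(* partial trace over the last factor C of A (x) (B (x) C), giving an operator on A (x) B *)
Definition ptr3 (a b c : nat) (M : 'M[C]_(a * (b * c))) : 'M[C]_(a * b) :=
  \matrix_(k, k') \sum_(z < c)
     M (tidx (untidx k).1 (tidx (untidx k).2 z)) (tidx (untidx k').1 (tidx (untidx k').2 z)).

(* spectral projection {X <= 0} onto the nonpositive eigenspace of X (X Hermitian),
   computed from the spectral decomposition X = P^-1 diag(d) P with P unitary *)
Definition nonpos_proj (n : nat) (X : 'M[C]_n) : 'M[C]_n :=
  invmx (spectralmx X) *m
  diag_mx (\row_i (if spectral_diag X 0 i <= 0 then (1 : C) else 0)) *m spectralmx X.

(* information spectrum collision entropy R_eps(B'|B) for rho on H_a (x) H_b
   (the first factor is the system "A") *)
Definition Reps (a b : nat) (rho : 'M[C]_(a * b)) (eps : R) : \bar R :=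
  let rhoB := ptr1 rho in
  let rho2B := ptr1 (rho *m rho) in
  ereal_sup ((fun l : R => l%:E) @`
    [set l : R | 1 - eps <=
       complex.Re (\tr (nonpos_proj (rho2B - (real_complex R (2 `^ (- l))) *: (rhoB *m rhoB)) *m rhoB))]).

Definition Rbar (a b : nat) (rho : 'M[C]_(a * b)) (eps : R) : \bar R :=
  ereal_sup [set r | exists (c : nat) (rhoABC : 'M[C]_(a * (b * c))),
     [/\ is_state rhoABC, ptr3 rhoABC = rho & r = Reps rhoABC eps]].

Definition id_tensor (k b b' : nat) (F : 'M[C]_b -> 'M[C]_b') (M : 'M[C]_(k * b))
  : 'M[C]_(k * b') :=
  \matrix_(r, s) F (\matrix_(y, y') M (tidx (untidx r).1 y) (tidx (untidx s).1 y'))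
                   (untidx r).2 (untidx s).2.

Definition completely_positive (b b' : nat) (F : 'M[C]_b -> 'M[C]_b') : Prop :=
  forall (k : nat) (M : 'M[C]_(k * b)), psd M -> psd (id_tensor F M).

Definition trace_preserving (b b' : nat) (F : 'M[C]_b -> 'M[C]_b') : Prop :=
  forall M : 'M[C]_b, \tr (F M) = \tr M.

End QDefs.

(* Let ρ_ABC extend ρ_AB.  Complete positivity makes the Choi matrix of F
   positive; splitting it into rank-one terms gives Kraus operators,
   F(M) = Σ_k K_k M K_k†, hence the Stinespring isometry
   V = Σ_k K_k ⊗ |k⟩ ⊗ 1_C from BC to B'EC.  Conjugating ρ_ABC by 1_A ⊗ V
   yields an extension of (id ⊗ F)(ρ_AB) with side system EC.
   R_ε(A|BC) is invariant under such isometries: the marginals on BC become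
   V σ V†, and V† {V X V† ≤ 0} V = {X ≤ 0} because the spectral projection is
   a polynomial in its argument and V† (V X V†)^k V = X^k.  So every value in
   the supremum defining R̄_ε(A|B) occurs in the one defining R̄_ε(A|B'). *)

From HB Require Import structures.
From mathcomp Require Import all_boot all_order all_algebra.
From mathcomp Require Import complex.
From mathcomp Require Import classical_sets reals ereal exp.
From mathcomp Require Import sesquilinear spectral.
Set Implicit Arguments. Unset Strict Implicit. Unset Printing Implicit Defensive.
Import Order.TTheory GRing.Theory Num.Theory.
Local Open Scope ring_scope.

Section MatrixPolynomial.
Variable K : comNzRingType.

Definition mxeval n (p : {poly K}) (X : 'M[K]_n) : 'M[K]_n :=
  \sum_(i < size p) p`_i *: X ^+ i.

Lemma mxeval_diag n (p : {poly K}) (d : 'rV[K]_n) :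
  mxeval p (diag_mx d) = diag_mx (\row_i p.[d 0 i]).
Proof.
have diagX k : diag_mx d ^+ k = diag_mx (\row_i d 0 i ^+ k).
  elim: k => [|k IHk]; first by apply/matrixP => i j; rewrite !mxE.
  rewrite exprS IHk -mulmxE mulmx_diag; congr diag_mx.
  by apply/rowP => i; rewrite !mxE exprS.
apply/matrixP => i j; rewrite /mxeval summxE !mxE horner_coef -sumrMnl.
by apply: eq_bigr => k _; rewrite diagX !mxE mulrnAr.
Qed.

Lemma mxeval_conj m n (W : 'M[K]_(m, n)) (W' : 'M[K]_(n, m)) (p : {poly K}) Y :
  W' *m W = 1%:M -> W' *m mxeval p (W *m Y *m W') *m W = mxeval p Y.
Proof.
move=> WW; have conjX k : W' *m (W *m Y *m W') ^+ k *m W = Y ^+ k.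
  elim: k => [|k IHk]; first by rewrite !expr0 mulmx1 WW.
  by rewrite !exprS -!mulmxE -IHk !mulmxA WW mul1mx.
rewrite /mxeval mulmx_sumr mulmx_suml; apply: eq_bigr => i _.
by rewrite -scalemxAr -scalemxAl conjX.
Qed.

End MatrixPolynomial.

Lemma poly_interpolation (K : fieldType) (s : seq K) (f : K -> K) :
  exists p : {poly K}, {in s, forall x, p.[x] = f x}.
Proof.
elim: s => [|a s [p Hp]]; first by exists 0.
have [as_|as_N] := boolP (a \in s).
  by exists p => x; rewrite inE => /predU1P[->|]; apply: Hp.
pose r := \prod_(x <- s) ('X - x%:P).
have r_s x : x \in s -> r.[x] = 0 by move=> xs; apply/rootP; rewrite root_prod_XsubC.
have r_a : r.[a] != 0 by rewrite -/(root r a) root_prod_XsubC.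
exists (p + ((f a - p.[a]) / r.[a]) *: r) => x; rewrite inE => /predU1P[->|xs].
  by rewrite hornerD hornerZ -mulrA mulVf // mulr1 addrC subrK.
by rewrite hornerD hornerZ (r_s x xs) mulr0 addr0 Hp.
Qed.

Lemma linear_matrix_sum_delta (K : comNzRingType) m n (F : 'M[K]_m -> 'M[K]_n)
    (M : 'M[K]_m) :
  linear F -> F M = \sum_i \sum_j M i j *: F (delta_mx i j).
Proof.
move=> FL.
pose Fl : {linear 'M[K]_m -> 'M[K]_n} := HB.pack F (GRing.isLinear.Build _ _ _ _ F FL).
have -> : F = Fl by [].
rewrite {1}(matrix_sum_delta M) linear_sum; apply: eq_bigr => i _.
by rewrite linear_sum; apply: eq_bigr => j _; rewrite linearZ.
Qed.

Lemma sum_eq_delta (T : pzSemiRingType) n (i : 'I_n) (f : 'I_n -> T) :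
  \sum_j (i == j)%:R * f j = f i.
Proof.
rewrite (bigD1 i) //= eqxx mul1r big1 ?addr0 // => j.
by rewrite eq_sym => /negPf->; rewrite mul0r.
Qed.

Lemma untidxK m n (i : 'I_m) (j : 'I_n) : untidx (tidx i j) = (i, j).
Proof. by rewrite /untidx /tidx /mxvec_index cast_ordK enum_rankK. Qed.

Lemma tidxK m n (k : 'I_(m * n)) : tidx (untidx k).1 (untidx k).2 = k.
Proof. by rewrite /untidx /tidx /mxvec_index -surjective_pairing enum_valK cast_ordKV. Qed.

Lemma eq_tidx m n (i i' : 'I_m) (j j' : 'I_n) :
  (tidx i j == tidx i' j') = (i == i') && (j == j').
Proof.
apply/eqP/andP => [E|[/eqP-> /eqP->]//].
by have := congr1 (@untidx m n) E; rewrite !untidxK => -[-> ->].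
Qed.

Lemma big_tidx (V : nmodType) m n (f : 'I_(m * n) -> V) :
  \sum_k f k = \sum_i \sum_j f (tidx i j).
Proof.
rewrite pair_bigA /= (reindex (fun p : 'I_m * 'I_n => tidx p.1 p.2)) //=.
exists (@untidx m n) => [p _|k _]; first by rewrite untidxK -surjective_pairing.
by rewrite tidxK.
Qed.

Section Quantum.
Variable R : realType.
Local Notation C := (R[i]).

Lemma adjE m n (M : 'M[C]_(m, n)) i j : adj M i j = (M j i)^*.
Proof. by rewrite !mxE. Qed.

Lemma adjK m n (M : 'M[C]_(m, n)) : adj (adj M) = M.
Proof. exact: trmxCK. Qed.

Lemma adjM m n p (A : 'M[C]_(m, n)) (B : 'M[C]_(n, p)) :
  adj (A *m B) = adj B *m adj A.
Proof. by rewrite /adj trmx_mul map_mxM. Qed.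

Lemma adjB m n (A B : 'M[C]_(m, n)) : adj (A - B) = adj A - adj B.
Proof. by apply/matrixP => i j; rewrite !mxE rmorphB. Qed.

Lemma adjZ m n a (A : 'M[C]_(m, n)) : adj (a *: A) = a^* *: adj A.
Proof. by apply/matrixP => i j; rewrite !mxE rmorphM. Qed.

Lemma hermitian_normal n (X : 'M[C]_n) : adj X = X -> X \is normalmx.
Proof. by move=> XE; apply/normalmxP; rewrite -/(adj X) XE. Qed.

Lemma psd_conj m n (W : 'M[C]_(m, n)) (M : 'M[C]_n) :
  psd M -> psd (W *m M *m adj W).
Proof.
move=> [MH M_ge0]; split; first by rewrite !adjM adjK MH mulmxA.
by move=> v; rewrite !mulmxA -mulmxA -adjM; apply: M_ge0.
Qed.

Lemma psd_gram m n (u : 'M[C]_(m, n)) : psd (adj u *m u).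
Proof.
split; first by rewrite adjM adjK.
move=> v; set w := v *m adj u.
have -> : v *m (adj u *m u) *m adj v = w *m adj w by rewrite adjM adjK !mulmxA.
by rewrite mxE; apply: sumr_ge0 => j _; rewrite adjE mul_conjC_ge0.
Qed.

Lemma mxtrace_conj m n (W : 'M[C]_(m, n)) (M : 'M[C]_n) :
  adj W *m W = 1%:M -> \tr (W *m M *m adj W) = \tr M.
Proof. by move=> WW; rewrite mxtrace_mulC mulmxA WW mul1mx. Qed.

Lemma nonpos_proj_mxeval n (X : 'M[C]_n) (q : {poly C}) :
  X \is normalmx ->
  (forall i, q.[spectral_diag X 0 i] = if spectral_diag X 0 i <= 0 then 1 else 0) ->
  nonpos_proj X = mxeval q X.
Proof.
move=> /orthomx_spectralP XE qE; rewrite /nonpos_proj.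
set P := spectralmx X in XE *; set d := spectral_diag X in XE qE *.
have P_unit : P \in unitmx by exact: spectral_unit.
have := mxeval_conj (W := invmx P) q (diag_mx d) (mulmxV P_unit).
rewrite -XE mxeval_diag => qXE.
have -> : mxeval q X = invmx P *m (P *m mxeval q X *m invmx P) *m P.
  by rewrite !mulmxA mulVmx // mul1mx -mulmxA mulVmx // mulmx1.
by rewrite qXE; congr (_ *m diag_mx _ *m _); apply/rowP => i; rewrite !mxE qE.
Qed.

(* Interpolating the indicator of the nonpositive reals on the spectra of both
   X and W X W† gives one polynomial q with {X ≤ 0} = q(X) and
   {W X W† ≤ 0} = q(W X W†). *)
Lemma nonpos_proj_isometry m n (W : 'M[C]_(m, n)) (X : 'M[C]_n) :
  adj W *m W = 1%:M -> adj X = X ->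
  adj W *m nonpos_proj (W *m X *m adj W) *m W = nonpos_proj X.
Proof.
move=> WW XH; set Y := W *m X *m adj W.
have YH : adj Y = Y by rewrite /Y !adjM adjK XH mulmxA.
pose spectrum k (Z : 'M[C]_k) := [seq spectral_diag Z 0 i | i <- enum 'I_k].
have [q qE] := poly_interpolation (spectrum _ X ++ spectrum _ Y)
  (fun x => if x <= 0 then 1 else 0).
rewrite (nonpos_proj_mxeval (q := q) (hermitian_normal YH)); last first.
  by move=> i; apply: qE; rewrite mem_cat map_f ?orbT ?mem_enum.
rewrite (nonpos_proj_mxeval (q := q) (hermitian_normal XH)); last first.
  by move=> i; apply: qE; rewrite mem_cat map_f ?mem_enum.
exact: mxeval_conj.
Qed.

Definition id_tensor_mx a p q (W : 'M[C]_(p, q)) : 'M[C]_(a * p, a * q) :=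
  \matrix_(r, s) (((untidx r).1 == (untidx s).1)%:R * W (untidx r).2 (untidx s).2).

Lemma id_tensor_mxE a p q (W : 'M[C]_(p, q)) i j i' j' :
  id_tensor_mx a W (tidx i j) (tidx i' j') = (i == i')%:R * W j j'.
Proof. by rewrite mxE !untidxK. Qed.

Lemma mul_id_tensor_mx a p q r (W : 'M[C]_(p, q)) (M : 'M[C]_(a * q, r)) i j s :
  (id_tensor_mx a W *m M) (tidx i j) s = \sum_b W j b * M (tidx i b) s.
Proof.
rewrite mxE big_tidx.
under eq_bigr do under eq_bigr do rewrite id_tensor_mxE -mulrA.
by under eq_bigr do rewrite -mulr_sumr; rewrite sum_eq_delta.
Qed.

Lemma mul_mx_id_tensor a p q r (W : 'M[C]_(p, q)) (M : 'M[C]_(r, a * p)) s i j :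
  (M *m id_tensor_mx a W) s (tidx i j) = \sum_b M s (tidx i b) * W b j.
Proof.
rewrite mxE big_tidx.
under eq_bigr do under eq_bigr do rewrite id_tensor_mxE eq_sym mulrCA.
by under eq_bigr do rewrite -mulr_sumr; rewrite sum_eq_delta.
Qed.

Lemma id_tensor_mxM a p q r (W1 : 'M[C]_(p, q)) (W2 : 'M[C]_(q, r)) :
  id_tensor_mx a W1 *m id_tensor_mx a W2 = id_tensor_mx a (W1 *m W2).
Proof.
apply/matrixP => k l; rewrite -[k]tidxK -[l]tidxK mul_id_tensor_mx id_tensor_mxE.
by rewrite mxE mulr_sumr; apply: eq_bigr => b _; rewrite id_tensor_mxE mulrCA.
Qed.

Lemma id_tensor_mx1 a p : id_tensor_mx a (1%:M : 'M[C]_p) = 1%:M.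
Proof.
apply/matrixP => k l; rewrite -[k]tidxK -[l]tidxK id_tensor_mxE !mxE eq_tidx.
by case: eqP; case: eqP; rewrite ?mul1r ?mul0r.
Qed.

Lemma adj_id_tensor_mx a p q (W : 'M[C]_(p, q)) :
  adj (id_tensor_mx a W) = id_tensor_mx a (adj W).
Proof.
apply/matrixP => k l; rewrite -[k]tidxK -[l]tidxK adjE !id_tensor_mxE adjE.
by rewrite rmorphM /= conjC_nat eq_sym.
Qed.

Lemma id_tensor_mx_isometry a p q (W : 'M[C]_(p, q)) :
  adj W *m W = 1%:M -> adj (id_tensor_mx a W) *m id_tensor_mx a W = 1%:M.
Proof. by move=> WW; rewrite adj_id_tensor_mx id_tensor_mxM WW id_tensor_mx1. Qed.

Lemma ptr1_id_tensor_mx a p q (W : 'M[C]_(p, q)) (V : 'M[C]_(q, p)) (M : 'M[C]_(a * q)) :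
  ptr1 (id_tensor_mx a W *m M *m id_tensor_mx a V) = W *m ptr1 M *m V.
Proof.
apply/matrixP => j j'; rewrite !mxE.
under eq_bigr do rewrite mul_mx_id_tensor.
under eq_bigr do under eq_bigr do rewrite mul_id_tensor_mx mulr_suml.
under [RHS]eq_bigr do rewrite !mxE mulr_suml.
rewrite exchange_big; apply: eq_bigr => b' _.
rewrite exchange_big; apply: eq_bigr => b _.
by rewrite mxE mulr_sumr mulr_suml.
Qed.

Lemma conj_id_tensor_mxE a p q (V : 'M[C]_(p, q)) (M : 'M[C]_(a * q)) i j i' j' :
  (id_tensor_mx a V *m M *m adj (id_tensor_mx a V)) (tidx i j) (tidx i' j') =
  \sum_b' (\sum_b V j b * M (tidx i b) (tidx i' b')) * (V j' b')^*.
Proof.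
rewrite adj_id_tensor_mx mul_mx_id_tensor; apply: eq_bigr => b' _.
by rewrite mul_id_tensor_mx adjE.
Qed.

Lemma adj_ptr1 m n (M : 'M[C]_(m * n)) : adj (ptr1 M) = ptr1 (adj M).
Proof.
by apply/matrixP => j j'; rewrite !mxE rmorph_sum; apply: eq_bigr => i _; rewrite adjE.
Qed.

Lemma Reps_isometry a p q (V : 'M[C]_(p, q)) (rho : 'M[C]_(a * q)) eps :
  adj V *m V = 1%:M -> adj rho = rho ->
  Reps (id_tensor_mx a V *m rho *m adj (id_tensor_mx a V)) eps = Reps rho eps.
Proof.
move=> VV rhoH; set L := id_tensor_mx a V.
have LL : adj L *m L = 1%:M by exact: id_tensor_mx_isometry.
have ptr1_conj M : ptr1 (L *m M *m adj L) = V *m ptr1 M *m adj V.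
  by rewrite adj_id_tensor_mx ptr1_id_tensor_mx.
have sq_conj : (L *m rho *m adj L) *m (L *m rho *m adj L) = L *m (rho *m rho) *m adj L.
  by rewrite !mulmxA -[L *m rho *m adj L *m L]mulmxA LL mulmx1.
rewrite /Reps sq_conj !ptr1_conj; congr (ereal_sup (_ @` _)).
apply: boolp.funext => l /=; set t := real_complex R _.
have tR : t^* = t by exact: conjc_real.
set A := ptr1 (rho *m rho); set B := ptr1 rho; set X := A - t *: (B *m B).
have XH : adj X = X.
  by rewrite adjB adjZ adjM /A /B !adj_ptr1 adjM rhoH tR.
have -> : V *m A *m adj V - t *: (V *m B *m adj V *m (V *m B *m adj V)) = V *m X *m adj V.
  rewrite mulmxBr mulmxBl -scalemxAr -scalemxAl.
  by rewrite !mulmxA -(mulmxA _ (adj V) V) VV mulmx1.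
by rewrite 2!mulmxA mxtrace_mulC 2!mulmxA nonpos_proj_isometry.
Qed.

Definition max_entangled n : 'rV[C]_(n * n) :=
  \row_s ((untidx s).1 == (untidx s).2)%:R.

Lemma id_tensor_choi n m (F : 'M[C]_n -> 'M[C]_m) i y i' y' :
  id_tensor F (adj (max_entangled n) *m max_entangled n) (tidx i y) (tidx i' y')
  = F (delta_mx i i') y y'.
Proof.
rewrite mxE !untidxK /=; congr (F _ y y'); apply/matrixP => x x'.
rewrite !mxE big_ord1 adjE !mxE !untidxK /= conjC_nat (eq_sym i x) (eq_sym i' x').
by case: eqP; case: eqP; rewrite ?mul1r ?mul0r.
Qed.

Lemma psd_rank1_decomposition n (J : 'M[C]_n) :
  psd J -> exists w : 'I_n -> 'rV[C]_n, J = \sum_k adj (w k) *m w k.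
Proof.
move=> [JH J_ge0]; have /orthomx_spectralP JE := hermitian_normal JH.
set P := spectralmx J in JE; set d := spectral_diag J in JE.
have P_unitary : P \is unitarymx by exact: spectral_unitarymx.
rewrite invmx_unitary // -/(adj P) in JE.
have PP : P *m adj P = 1%:M by apply/unitarymxP.
have d_ge0 k : 0 <= d 0 k.
  have : P *m J *m adj P = diag_mx d by rewrite JE !mulmxA PP mul1mx -mulmxA PP mulmx1.
  move=> /matrixP /(_ k k); rewrite [diag_mx d k k]mxE eqxx mulr1n => <-.
  have -> : (P *m J *m adj P) k k = (row k P *m J *m adj (row k P)) 0 0.
    by rewrite !mxE; apply: eq_bigr => s _; rewrite -row_mul !mxE.
  exact: J_ge0.
exists (fun k => sqrtC (d 0 k) *: row k P).
rewrite {1}JE; apply/matrixP => i j; rewrite summxE !mxE; apply: eq_bigr => k _.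
rewrite !mxE big_ord1 (bigD1 k) //= big1 ?addr0 => [|l /negPf lk]; last first.
  by rewrite !mxE lk mulr0n mulr0.
have sqrt_real : sqrtC (d 0 k) \is Num.real by rewrite ger0_real ?sqrtC_ge0.
rewrite !mxE eqxx mulr1n rmorphM /= (conj_Creal sqrt_real).
by rewrite mulrACA -expr2 sqrtCK mulrCA mulrA.
Qed.

Section Kraus.
Variables (n m r : nat) (F : 'M[C]_n -> 'M[C]_m) (K : 'I_r -> 'M[C]_(m, n)).
Hypothesis choiE :
  forall i i' y y', F (delta_mx i i') y y' = \sum_k K k y i * (K k y' i')^*.

Lemma kraus_of_choi : linear F -> forall M, F M = \sum_k K k *m M *m adj (K k).
Proof.
move=> FL M; rewrite (linear_matrix_sum_delta M FL).
apply/matrixP => y y'; rewrite !summxE.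
under eq_bigr do rewrite summxE.
under eq_bigr do under eq_bigr do rewrite mxE choiE mulr_sumr.
rewrite exchange_big /=; under eq_bigr do rewrite exchange_big /=.
rewrite exchange_big /=; apply: eq_bigr => k _.
rewrite mxE; apply: eq_bigr => j _.
rewrite adjE [(K k *m M) y j]mxE mulr_suml; apply: eq_bigr => i _.
by rewrite mulrCA mulrA.
Qed.

Lemma kraus_isometry_of_choi : trace_preserving F -> \sum_k adj (K k) *m K k = 1%:M.
Proof.
move=> FT; apply/matrixP => i' i; rewrite summxE.
have trE : \tr (delta_mx i i' : 'M[C]_n) = (i == i')%:R.
  by rewrite /mxtrace (bigD1 i) //= big1 ?addr0 => [|x /negPf xi]; rewrite mxE ?eqxx ?xi.
rewrite [1%:M i' i]mxE eq_sym -trE -FT /mxtrace.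
under [RHS]eq_bigr do rewrite choiE.
rewrite [RHS]exchange_big; apply: eq_bigr => k _; rewrite mxE; apply: eq_bigr => y _.
by rewrite adjE mulrC.
Qed.

End Kraus.

Lemma kraus_decomposition n m (F : 'M[C]_n -> 'M[C]_m) :
  linear F -> completely_positive F -> trace_preserving F ->
  exists r (K : 'I_r -> 'M[C]_(m, n)),
    (forall M, F M = \sum_k K k *m M *m adj (K k)) /\ \sum_k adj (K k) *m K k = 1%:M.
Proof.
(* The rank-one terms (w k)† (w k) of the Choi matrix, reshaped, give the Kraus operators. *)
move=> FL FCP FT; pose omega := max_entangled n.
have [w wE] := psd_rank1_decomposition (FCP _ _ (psd_gram omega)).
pose K k : 'M[C]_(m, n) := \matrix_(y, i) (w k 0 (tidx i y))^*.
have choiE i i' y y' : F (delta_mx i i') y y' = \sum_k K k y i * (K k y' i')^*.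
  rewrite -id_tensor_choi wE summxE; apply: eq_bigr => k _.
  by rewrite !mxE big_ord1 !mxE conjCK.
by exists (n * m)%N, K; split; [exact: kraus_of_choi | exact: kraus_isometry_of_choi].
Qed.

Section Stinespring.
Variables (n m r c : nat) (K : 'I_r -> 'M[C]_(m, n)).

(* The isometry Σ_k K_k ⊗ |k⟩ ⊗ 1_c from B ⊗ C to B' ⊗ (E ⊗ C). *)
Definition stinespring : 'M[C]_(m * (r * c), n * c) :=
  \matrix_(s, t) (((untidx (untidx s).2).2 == (untidx t).2)%:R *
                  K (untidx (untidx s).2).1 (untidx s).1 (untidx t).1).

Lemma stinespringE y k z b z' :
  stinespring (tidx y (tidx k z)) (tidx b z') = (z == z')%:R * K k y b.
Proof. by rewrite mxE !untidxK. Qed.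

Lemma stinespring_isometry :
  \sum_k adj (K k) *m K k = 1%:M -> adj stinespring *m stinespring = 1%:M.
Proof.
move=> KK; apply/matrixP => t t'; rewrite -[t]tidxK -[t']tidxK.
set b := (untidx t).1; set z := (untidx t).2.
set b' := (untidx t').1; set z' := (untidx t').2.
have -> : (1%:M : 'M[C]_(n * c)) (tidx b z) (tidx b' z') =
    (z == z')%:R * (\sum_k adj (K k) *m K k) b b'.
  by rewrite KK !mxE eq_tidx; case: eqP; case: eqP; rewrite ?mul1r ?mul0r.
rewrite mxE big_tidx; under eq_bigr do rewrite big_tidx.
under eq_bigr do under eq_bigr do under eq_bigr do
  rewrite adjE !stinespringE rmorphM /= conjC_nat [_ == z]eq_sym -mulrA.
under eq_bigr do under eq_bigr do rewrite sum_eq_delta mulrCA.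
rewrite summxE mulr_sumr exchange_big; apply: eq_bigr => k _.
by rewrite mxE mulr_sumr; apply: eq_bigr => y _; rewrite adjE.
Qed.

Lemma conj_stinespringE a (M : 'M[C]_(a * (n * c))) i y i' y' k z :
  (id_tensor_mx a stinespring *m M *m adj (id_tensor_mx a stinespring))
     (tidx i (tidx y (tidx k z))) (tidx i' (tidx y' (tidx k z))) =
  \sum_b' (\sum_b K k y b * M (tidx i (tidx b z)) (tidx i' (tidx b' z))) * (K k y' b')^*.
Proof.
rewrite conj_id_tensor_mxE big_tidx; apply: eq_bigr => b' _.
under eq_bigr do rewrite stinespringE rmorphM /= conjC_nat mulrCA.
rewrite sum_eq_delta; congr (_ * _).
rewrite big_tidx; apply: eq_bigr => b _.
by under eq_bigr do rewrite stinespringE -mulrA; rewrite sum_eq_delta.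
Qed.

Lemma ptr3_conj_stinespring a (F : 'M[C]_n -> 'M[C]_m) (rho : 'M[C]_(a * n))
    (rho3 : 'M[C]_(a * (n * c))) :
  (forall M, F M = \sum_k K k *m M *m adj (K k)) -> ptr3 rho3 = rho ->
  ptr3 (id_tensor_mx a stinespring *m rho3 *m adj (id_tensor_mx a stinespring))
  = id_tensor F rho.
Proof.
move=> FE rho3E; apply/matrixP => s t; rewrite -[s]tidxK -[t]tidxK.
rewrite /id_tensor !mxE !untidxK /= FE summxE big_tidx; apply: eq_bigr => k _.
under eq_bigr do rewrite conj_stinespringE.
rewrite mxE exchange_big; apply: eq_bigr => b' _.
rewrite -mulr_suml mxE adjE; congr (_ * _).
rewrite exchange_big; apply: eq_bigr => b _.
by rewrite !mxE -rho3E mxE !untidxK /= mulr_sumr.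
Qed.

End Stinespring.

End Quantum.

Theorem proposition1 (R : realType) (dA dB dB' : nat)
  (rho : 'M[R[i]]_(dA * dB)) (eps : R)
  (F : 'M[R[i]]_dB -> 'M[R[i]]_dB') :
  is_state rho -> 0 <= eps ->
  linear F -> completely_positive F -> trace_preserving F ->
  (Rbar rho eps <= Rbar (id_tensor F rho) eps)%E.
Proof.
(* Every extension in [Rbar] is a state. *)
move=> _ _ FL FCP FT.
have [r [K [FE KK]]] := kraus_decomposition FL FCP FT.
apply/ereal_supP => _ [c [rho3 [[rho3_psd rho3_tr] rho3E ->]]].
pose L := id_tensor_mx dA (stinespring c K).
have LL : adj L *m L = 1%:M by apply/id_tensor_mx_isometry/stinespring_isometry.
apply: ereal_sup_ubound; exists (r * c)%N, (L *m rho3 *m adj L); split.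
- by split; [exact: psd_conj | rewrite mxtrace_conj].
- exact: ptr3_conj_stinespring.
- by symmetry; apply: Reps_isometry; [exact: stinespring_isometry | case: rho3_psd].
Qed.
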